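(* Let $t\geq 2$ be an integer, $m=4t+2$, $n=2^m+1$, and let $\delta_2=2^{4t-1}+\frac{2^{4t}-1}{5}$, $\delta_3=\delta_2-6$, and $\delta_4=\delta_2-8$, $\delta_5=\delta_2-24$ if $t=2$, $\delta_4=\delta_2-96$, $\delta_5=\delta_2-102$ if $t>2$. If $1\leq x\leq 2^{2t+2}+2^{2t+1}+3$ or $x\in\{\delta_2,\delta_3,\delta_4,\delta_5\}$, then $|C_x|=2m$.
   Context: For $n=2^m+1$ and an integer $x$, the 2-cyclotomic coset of $x$ modulo $n$ is $C_x=\{x\cdot 2^{j} \bmod n : j\geq 0\}\subseteq\{0,1,\dots,n-1\}$, and $|C_x|$ its cardinality. *)

From mathcomp Require Import all_boot.
Set Implicit Arguments. Unset Strict Implicit. Unset Printing Implicit Defensive.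

(* Exponents j are taken with j < n
   (i.e. j : 'I_n); this loses nothing since the sequence x*2^j mod n is
   eventually periodic with preperiod + period <= n (pigeonhole on n residues),
   and is in fact purely periodic for odd n. *)
Definition cyc_coset (n x : nat) : {set 'I_n} :=
  [set y : 'I_n | [exists j : 'I_n, val y == (x * 2 ^ j) %% n]].

Definition delta2 (t : nat) : nat := 2 ^ (4 * t - 1) + (2 ^ (4 * t) - 1) %/ 5.
Definition delta3 (t : nat) : nat := delta2 t - 6.
Definition delta4 (t : nat) : nat := if t == 2 then delta2 t - 8 else delta2 t - 96.
Definition delta5 (t : nat) : nat := if t == 2 then delta2 t - 24 else delta2 t - 102.

(* Call d > 0 a period of x modulo n if x 2^d = x (mod n).  For odd n the periods
   are closed under gcd, and |C_x| is the least period, so |C_x| = 2m as soon as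
   no proper divisor of 2m = 4(2t+1) is a period (2m is one since 2^(2m) = 1).
   A proper divisor with even cofactor divides m, and n | x(2^m - 1) is impossible
   for 0 < x < n since 2^m - 1 is coprime to n; any other one is 4f with f a proper
   divisor of 2t+1, and then n | x(2^(2f) + 1).  For small x that product is
   below n.  For x = delta2 - k we use 5 (8 delta2 + 3) = 7 n and 5 | 2^(2f) + 1
   (f is odd): they reduce n | x(2^(2f) + 1) to n | (8k + 3)(2^(2f) + 1), again
   too small. *)

From mathcomp Require Import all_boot zify.

Set Implicit Arguments.
Unset Strict Implicit.
Unset Printing Implicit Defensive.

Definition coset_period (N x d : nat) : bool := x * 2 ^ d == x %[mod N].

Lemma coset_periodE N x d : coset_period N x d = (N %| x * (2 ^ d - 1)).
Proof. by rewrite /coset_period eqn_mod_dvd ?leq_pmulr ?expn_gt0 // mulnBr muln1. Qed.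

Lemma eqn_modMr_coprime N k a b :
  coprime N k -> (a * k == b * k %[mod N]) = (a == b %[mod N]).
Proof.
move=> coNk; wlog le_ba : a b / b <= a.
  by move=> IH; case: (leqP b a) => [/IH //|/ltnW/IH]; rewrite eq_sym => ->.
by rewrite !eqn_mod_dvd ?leq_mul // -mulnBl Gauss_dvdl.
Qed.

Section CosetPeriods.

Variables N x : nat.
Hypothesis oddN : odd N.

Lemma coset_period0 : coset_period N x 0.
Proof. by rewrite /coset_period muln1. Qed.

Lemma coset_periodD a b :
  coset_period N x a -> coset_period N x b -> coset_period N x (a + b).
Proof.
move=> /eqP per_a /eqP per_b.
by rewrite /coset_period expnD mulnA -modnMml per_a modnMml per_b.
Qed.

Lemma coset_periodMn a k : coset_period N x a -> coset_period N x (a * k).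
Proof.
move=> per_a; elim: k => [|k IHk]; first by rewrite muln0 coset_period0.
by rewrite mulnS coset_periodD.
Qed.

Lemma coset_period_shift i j :
  i <= j -> x * 2 ^ j == x * 2 ^ i %[mod N] -> coset_period N x (j - i).
Proof.
move=> le_ij; rewrite -{1}(subnKC le_ij) expnD mulnCA mulnC.
by rewrite eqn_modMr_coprime // coprimeXr // coprimen2.
Qed.

Lemma coset_periodB a b : a <= b ->
  coset_period N x a -> coset_period N x b -> coset_period N x (b - a).
Proof.
move=> le_ab /eqP per_a /eqP per_b.
by apply: coset_period_shift; rewrite // per_a per_b.
Qed.

Lemma coset_period_gcd a b : 0 < a ->
  coset_period N x a -> coset_period N x b -> coset_period N x (gcdn a b).
Proof.
move=> a_gt0 per_a per_b; have [k _ /dvdnP[q def_q]] := Bezoutl b a_gt0.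
have -> : gcdn a b = q * a - k * b by rewrite -def_q addnK.
apply: coset_periodB; first by rewrite -def_q leq_addl.
  by rewrite mulnC coset_periodMn.
by rewrite mulnC coset_periodMn.
Qed.

Lemma coset_period_modn M j :
  coset_period N x M -> x * 2 ^ j = x * 2 ^ (j %% M) %[mod N].
Proof.
move=> per_M; have /eqP per_qM := coset_periodMn (j %/ M) per_M.
by rewrite {1}(divn_eq j M) (mulnC (j %/ M)) expnD mulnA -modnMml per_qM modnMml.
Qed.

End CosetPeriods.

Lemma card_cyc_coset N x M : odd N -> 0 < M <= N -> coset_period N x M ->
  (forall d, 0 < d < M -> ~~ coset_period N x d) -> #|cyc_coset N x| = M.
Proof.
move=> oddN /andP[M_gt0 le_MN] per_M minM; have N_gt0 := odd_gt0 oddN.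
pose rot (j : 'I_M) : 'I_N := Ordinal (ltn_pmod (x * 2 ^ j) N_gt0).
have -> : cyc_coset N x = [set rot j | j in 'I_M].
  apply/setP => y; rewrite inE; apply/existsP/imsetP => [[j /eqP def_y]|[j _ ->]].
    exists (Ordinal (ltn_pmod j M_gt0)) => //; apply: val_inj.
    by rewrite def_y /= (coset_period_modn _ per_M).
  by exists (widen_ord le_MN j).
have rot_inj (i j : 'I_M) : i <= j -> rot i = rot j -> i = j.
  move=> le_ij /(congr1 val) /= eq_ij.
  have per_ji : coset_period N x (j - i) by apply: coset_period_shift; rewrite // eq_ij.
  apply/val_inj/eqP; rewrite eqn_leq le_ij /= leqNgt -subn_gt0.
  apply: contraL per_ji => ji_gt0; apply: minM; rewrite ji_gt0 /=.
  by have := ltn_ord j; lia.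
rewrite card_imset ?card_ord // => i j.
by case: (leqP i j) => [/rot_inj // | /ltnW/rot_inj rot_ji /esym/rot_ji].
Qed.

Lemma coprime_pow2D1_pow2B1 m f :
  0 < m -> f %| m -> coprime (2 ^ m + 1) (2 ^ f - 1).
Proof.
move=> m_gt0 f_m; apply: (@coprime_dvdr _ (2 ^ m - 1)).
  by have [k ->] := dvdnP f_m; rewrite mulnC expnM !subn1 dvdn_pred_predX.
have -> : 2 ^ m + 1 = 2 ^ m - 1 + 2 by have := expn_gt0 2 m; lia.
rewrite coprime_sym /coprime gcdnDl -/(coprime _ 2) coprimen2.
by rewrite oddB ?expn_gt0 // oddX /= orbF eqn0Ngt m_gt0.
Qed.

Lemma dvdn_mul4_cases s g : g %| 4 * s -> g < 4 * s ->
  g %| 2 * s \/ exists2 f, g = 4 * f & [/\ f %| s, f < s & odd (s %/ f)].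
Proof.
move=> /dvdnP[c def_4s] lt_g; case odd_c: (odd c); last first.
  left; apply/dvdnP; exists c./2.
  by rewrite -[c](even_halfK (negbT odd_c)) -muln2 mulnAC in def_4s; lia.
have /dvdnP[f def_g] : 4 %| g.
  by rewrite -(@Gauss_dvdr 4 c) -?def_4s ?dvdn_mulr // (@coprimeXl 2 2) ?coprime2n.
have def_s : s = c * f by rewrite def_g mulnA in def_4s; lia.
have f_gt0 : 0 < f.
  by rewrite lt0n; apply: contraTneq lt_g => f0; rewrite def_g def_s f0 !muln0.
have c_gt1 : 1 < c.
  case: c {def_4s} odd_c def_s => [|[|]] // _ def_s.
  by rewrite def_g def_s mul1n mulnC ltnn in lt_g.
right; exists f; first by rewrite def_g mulnC.
by rewrite def_s mulnK // ltn_Pmull // odd_c; split=> //; apply/dvdn_mull/dvdnn.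
Qed.

Lemma card_cyc_coset_pow2 s x : 0 < s -> 0 < x < 2 ^ (2 * s) + 1 ->
  (forall f, f %| s -> f < s -> odd (s %/ f) ->
     ~~ (2 ^ (2 * s) + 1 %| x * (2 ^ (2 * f) + 1))) ->
  #|cyc_coset (2 ^ (2 * s) + 1) x| = 4 * s.
Proof.
set N := 2 ^ (2 * s) + 1 => s_gt0 /andP[x_gt0 x_lt] not_dvd.
have oddN : odd N by rewrite /N oddD oddX muln_eq0 /= eqn0Ngt s_gt0.
have per_4s : coset_period N x (4 * s).
  rewrite coset_periodE (_ : 4 * s = 2 * s * 2); last lia.
  by rewrite expnM -[in X in _ - X](exp1n 2) subn_sqr; apply/dvdn_mull/dvdn_mull.
apply: card_cyc_coset => // [| d /andP[d_gt0 lt_d]].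
  rewrite muln_gt0 s_gt0 /N mul2n -addnn expnD.
  by have lt_s := ltn_expl s (isT : 1 < 2); have := leq_mul lt_s lt_s; nia.
apply/negP => per_d.
have per_g : coset_period N x (gcdn d (4 * s)) by apply: coset_period_gcd.
have lt_g : gcdn d (4 * s) < 4 * s.
  exact: leq_ltn_trans (dvdn_leq d_gt0 (dvdn_gcdl _ _)) lt_d.
have [/dvdnP[k def_2s] | [f def_g [f_s lt_f odd_sf]]] :=
  dvdn_mul4_cases (dvdn_gcdr d (4 * s)) lt_g.
  have := coset_periodMn k per_g; rewrite mulnC -def_2s coset_periodE.
  by rewrite Gauss_dvdl ?coprime_pow2D1_pow2B1 ?muln_gt0 // gtnNdvd.
move: per_g; rewrite def_g coset_periodE (_ : 4 * f = 2 * f * 2); last lia.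
rewrite expnM -[in X in _ - X](exp1n 2) subn_sqr mulnCA Gauss_dvdr.
  by apply/negP; apply: not_dvd.
by rewrite coprime_pow2D1_pow2B1 ?muln_gt0 ?dvdn_pmul2l.
Qed.

Lemma mul3_leq_odd_cofactor f s : f %| s -> f < s -> odd (s %/ f) -> 3 * f <= s.
Proof.
move=> f_s lt_fs odd_q; rewrite -[s in _ <= s](divnK f_s) leq_mul2r odd_gt2 ?orbT //.
rewrite ltnNge; apply: contraL lt_fs => le_q1; rewrite -leqNgt -[s](divnK f_s).
by rewrite -[f in _ <= f]mul1n leq_mul2r le_q1 orbT.
Qed.

Lemma small_mul_pow2D1_lt t x f : 2 <= t -> x <= 2 ^ (2 * t + 2) + 2 ^ (2 * t + 1) + 3 ->
  3 * f <= 2 * t + 1 -> x * (2 ^ (2 * f) + 1) < 2 ^ (4 * t + 2) + 1.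
Proof.
move=> t_ge2 le_x le_f; set P := 2 ^ (2 * t - 2).
have e16 : 2 ^ (2 * t + 2) = 16 * P by rewrite -(expnD 2 4); congr (2 ^ _); lia.
have e8 : 2 ^ (2 * t + 1) = 8 * P by rewrite -(expnD 2 3); congr (2 ^ _); lia.
rewrite e16 e8 in le_x.
have -> : 2 ^ (4 * t + 2) = 64 * (P * P).
  by rewrite -expnD -(expnD 2 6); congr (2 ^ _); lia.
have P_ge4 : 4 <= P by rewrite (_ : 4 = 2 ^ 2) // leq_pexp2l //; lia.
have : 2 ^ (2 * f) + 1 <= P + 1 by rewrite leq_add2r leq_pexp2l //; lia.
move: (2 ^ (2 * f) + 1) => w le_w; have := leq_mul le_x le_w; nia.
Qed.

Lemma delta2_eq t : 0 < t -> 5 * (8 * delta2 t + 3) = 7 * (2 ^ (4 * t + 2) + 1).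
Proof.
move=> t_gt0; rewrite /delta2.
have half : 2 * 2 ^ (4 * t - 1) = 2 ^ (4 * t) by rewrite -expnS; congr (2 ^ _); lia.
have five : 5 %| 2 ^ (4 * t) - 1.
  by rewrite expnM subn1; apply: dvdn_trans (dvdn_pred_predX (2 ^ 4) t).
have := divnK five; have := expn_gt0 2 (4 * t); rewrite expnD; lia.
Qed.

Lemma delta2_ge t : 2 <= t -> 128 <= delta2 t.
Proof.
move=> t_ge2; rewrite /delta2 (_ : 128 = 2 ^ 7) //.
by apply: leq_trans (leq_addr _ _); rewrite leq_pexp2l //; lia.
Qed.

Lemma delta_offset_mul_pow2D1_lt t k f : 2 <= t -> k <= 102 -> (t = 2 -> k <= 24) ->
  odd f -> 3 * f <= 2 * t + 1 ->
  (8 * k + 3) * (2 ^ (2 * f) + 1) < 2 ^ (4 * t + 2) + 1.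
Proof.
move=> t_ge2 le_k le_k2 odd_f le_f; case: (ltnP t 3) => [t_lt3 | t_ge3].
  have t2 : t = 2 by lia.
  have : 2 ^ (2 * f) <= 2 ^ 2 by rewrite leq_pexp2l //; lia.
  have := le_k2 t2; rewrite t2 (_ : 2 ^ (4 * 2 + 2) = 1024) //.
  move: (2 ^ (2 * f)) => A; nia.
have le_2f : 2 * f + 1 <= 4 * t - 8.
  by move: le_f; rewrite -(odd_double_half f) odd_f -muln2; lia.
have : 2 ^ (2 * f) + 1 <= 2 ^ (4 * t - 8).
  apply: leq_trans (leq_pexp2l (isT : 0 < 2) le_2f).
  by rewrite expnD expn1 muln2 -addnn leq_add2l expn_gt0.
have -> : 2 ^ (4 * t + 2) = 1024 * 2 ^ (4 * t - 8).
  by rewrite -(expnD 2 10); congr (2 ^ _); lia.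
move: (2 ^ (2 * f) + 1) (2 ^ (4 * t - 8)) => w R le_w.
have le_r : 8 * k + 3 <= 819 by lia.
have := leq_mul le_r le_w; lia.
Qed.

Lemma dvdn5_pow2_odd f : odd f -> 5 %| 2 ^ (2 * f) + 1.
Proof.
move=> odd_f; rewrite -(odd_double_half f) odd_f -muln2.
have -> : 2 * (1 + f./2 * 2) = 2 + 4 * f./2 by lia.
by rewrite expnD expnM /dvdn -modnDml -modnMmr -modnXm (_ : 2 ^ 4 %% 5 = 1) // exp1n.
Qed.

Lemma delta_not_dvd t k f : 2 <= t -> k <= 102 -> (t = 2 -> k <= 24) ->
  odd f -> 3 * f <= 2 * t + 1 ->
  ~~ (2 ^ (4 * t + 2) + 1 %| (delta2 t - k) * (2 ^ (2 * f) + 1)).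
Proof.
move=> t_ge2 le_k le_k2 odd_f le_f.
have def_8x : 8 * (delta2 t - k) + (8 * k + 3) = 8 * delta2 t + 3.
  by have := delta2_ge t_ge2; lia.
have dvd_sum :
    2 ^ (4 * t + 2) + 1 %| (8 * (delta2 t - k) + (8 * k + 3)) * (2 ^ (2 * f) + 1).
  rewrite def_8x -(divnK (dvdn5_pow2_odd odd_f)) mulnA (mulnC _ 5) mulnA.
  by rewrite (delta2_eq (ltnW t_ge2)) mulnAC dvdn_mull.
apply/negP => dvd_x; move: dvd_sum.
rewrite mulnDl -mulnA dvdn_addr; last exact: dvdn_mull.
by rewrite gtnNdvd ?delta_offset_mul_pow2D1_lt // muln_gt0 !addn_gt0 !orbT.
Qed.

Lemma mem_deltas t x : x \in [:: delta2 t; delta3 t; delta4 t; delta5 t] ->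
  exists2 k, x = delta2 t - k & k <= 102 /\ (t = 2 -> k <= 24).
Proof.
rewrite !inE /delta3 /delta4 /delta5 => /or4P[] /eqP ->.
- by exists 0; rewrite ?subn0.
- by exists 6.
- by case: eqP => [_ | t_neq2]; [exists 8 | exists 96; split=> // /t_neq2].
- by case: eqP => [_ | t_neq2]; [exists 24 | exists 102; split=> // /t_neq2].
Qed.

Theorem lemma4p6 (t x : nat) :
  2 <= t ->
  (1 <= x <= 2 ^ (2 * t + 2) + 2 ^ (2 * t + 1) + 3) \/
    x \in [:: delta2 t; delta3 t; delta4 t; delta5 t] ->
  #|cyc_coset (2 ^ (4 * t + 2) + 1) x| = 2 * (4 * t + 2).
Proof.
move=> t_ge2 hx; set s := 2 * t + 1.
have [x_range not_dvd] : 0 < x < 2 ^ (4 * t + 2) + 1 /\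
    forall f, odd f -> 3 * f <= s -> ~~ (2 ^ (4 * t + 2) + 1 %| x * (2 ^ (2 * f) + 1)).
  case: hx => [/andP[x_gt0 le_x] | /mem_deltas[k -> [le_k le_k2]]].
    split=> [|f _ le_f].
      have := small_mul_pow2D1_lt (f := 0) t_ge2 le_x (leq0n _).
      by rewrite x_gt0 muln0 expn0; lia.
    by rewrite gtnNdvd ?small_mul_pow2D1_lt // muln_gt0 x_gt0 addn_gt0 orbT.
  split=> [|f]; last exact: delta_not_dvd.
  by have := delta2_eq (ltnW t_ge2); have := delta2_ge t_ge2; lia.
have e_m : 4 * t + 2 = 2 * s by rewrite /s; lia.
rewrite e_m in x_range not_dvd *; rewrite mulnA.
apply: card_cyc_coset_pow2 => [|//|f f_s lt_f odd_q]; first by rewrite /s addn1.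
apply: not_dvd; last exact: mul3_leq_odd_cofactor.
by apply: dvdn_odd f_s _; rewrite /s oddD oddM.
Qed.
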